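(* Let $N\ge2$, $M\ge2$ and $Q$ be integers with $1\le Q\le M-1$, write $\mathcal{M}=\{1,\dots,M\}$, let $0<\epsilon<1$, and let $\mathbf{H}_1,\dots,\mathbf{H}_M$ be $N\times N$ real symmetric positive semidefinite matrices. Let $v^{\max}_{\rm QP}$ be the optimal value of (P2): maximize $\|\mathbf{w}\|^2$ over $\mathbf{w}\in\mathbb{R}^N$, $\boldsymbol\beta\in\{0,1\}^M$ subject to $\mathbf{w}^T\mathbf{H}_i\mathbf{w}\le\beta_i\epsilon+(1-\beta_i)$ ($i\in\mathcal{M}$) and $\sum_i\beta_i=Q$; and let $v^{\max}_{\rm SDP}$ be the optimal value of (SDP3): maximize $\mathrm{Tr}[\mathbf{X}]$ over real symmetric $N\times N$ matrices $\mathbf{X}\succeq0$ and $\boldsymbol\beta\in\mathbb{R}^M$ subject to $\mathrm{Tr}[\mathbf{H}_i\mathbf{X}]\le\beta_i\epsilon+(1-\beta_i)$ ($i\in\mathcal{M}$), $\sum_i\beta_i=Q$, $0\le\beta_i\le1$. Then $$v^{\max}_{\rm QP}\ge\frac{\epsilon}{\tilde c(\epsilon)}\cdot\frac{1}{200\ln(50K)}\,v^{\max}_{\rm SDP},$$ where $K=\sum_{i=1}^M\min\{\mathrm{rank}(\mathbf{H}_i),\sqrt{2M}\}$ and $\tilde c(\epsilon)=1-\frac{1-\epsilon}{M-Q+1}$. *)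

From HB Require Import structures.
From mathcomp Require Import all_boot all_order all_algebra.
From mathcomp Require Import all_classical all_reals all_analysis.
Set Implicit Arguments. Unset Strict Implicit. Unset Printing Implicit Defensive.
Import Order.TTheory GRing.Theory Num.Theory.
Local Open Scope ring_scope.
Local Open Scope classical_set_scope.

Definition psd (R : realType) (N : nat) (A : 'M[R]_N) : Prop :=
  A^T = A /\ forall x : 'cV[R]_N, 0 <= (x^T *m A *m x) ord0 ord0.

Definition qform (R : realType) (N : nat) (A : 'M[R]_N) (w : 'cV[R]_N) : R :=
  (w^T *m A *m w) ord0 ord0.

Definition sqnorm (R : realType) (N : nat) (w : 'cV[R]_N) : R :=
  \sum_(j < N) (w j ord0) ^+ 2.

Definition v_QP (R : realType) (N M Q : nat) (eps : R) (H : 'I_M -> 'M[R]_N)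
  : \bar R :=
  ereal_sup [set ((sqnorm w)%:E) | w in
    [set w : 'cV[R]_N | exists beta : 'I_M -> bool,
       (forall i, qform (H i) w <= (beta i)%:R * eps + (1 - (beta i)%:R)) /\
       \sum_(i < M) ((beta i)%:R : R) = Q%:R]].

Definition v_SDP (R : realType) (N M Q : nat) (eps : R) (H : 'I_M -> 'M[R]_N)
  : \bar R :=
  ereal_sup [set ((\tr X)%:E) | X in
    [set X : 'M[R]_N | psd X /\ exists beta : 'I_M -> R,
       (forall i, \tr (H i *m X) <= beta i * eps + (1 - beta i)) /\
       \sum_(i < M) beta i = Q%:R /\
       (forall i, 0 <= beta i <= 1)]].

Definition K_of (R : realType) (N M : nat) (H : 'I_M -> 'M[R]_N) : R :=
  \sum_(i < M) Num.min ((\rank (H i))%:R) (Num.sqrt (2 * M%:R)).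

Definition ctilde (R : realType) (M Q : nat) (eps : R) : R :=
  1 - (1 - eps) / (M - Q + 1)%:R.

(* Write an optimal [X] of the relaxation as [X = V V^T] and round it to
   [w = V s] for a sign vector [s].  Averaged over all signs, [|w|^2] has mean
   [Tr X] and second moment at most [12 (Tr X)^2], while [(w^T H_i w)^m] has mean
   at most [(2m)!/m! Tr(H_i X)^m].  Taking [m = 8 + log2 k], where [k <= K] counts
   the constraints with [Tr(H_i X) > 0], Markov's inequality bounds the chance
   that some [w^T H_i w] exceeds [4m Tr(H_i X)]; a potential averaging all these
   events exhibits one [s] with [|w|^2 >= Tr X / 2] and every constraint within a
   factor [4m].  The fractional [beta] sums to [Q] with entries at most [1], so
   at least [Q] of them are [>= 1 / (M - Q + 1)]; making those the support of the
   binary [beta] leaves [Tr(H_i X) <= ctilde] on the support and [<= 1] off it,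
   and scaling [w] by [sqrt (eps / (4 m ctilde))] lands in (P2). *)

From HB Require Import structures.
From mathcomp Require Import all_boot all_order all_algebra.
From mathcomp Require Import all_classical all_reals all_analysis.
From mathcomp Require Import ring lra zify.
Import Order.TTheory GRing.Theory Num.Theory.
Set Implicit Arguments. Unset Strict Implicit. Unset Printing Implicit Defensive.
Local Open Scope ring_scope.

Section SignMean.
Variable R : realType.
Implicit Types (F G : (nat -> R) -> R) (a : nat -> R).

Definition scons (x : R) (s : nat -> R) : nat -> R :=
  fun k => if k is k'.+1 then s k' else x.

(* The mean of [F s] over the [2 ^ n] sign vectors [s], i.e. [s k = 1] or
   [s k = -1] for [k < n], and [s k = 0] for [k >= n]. *)
Fixpoint sign_mean n F : R :=
  if n is n'.+1 then
    (sign_mean n' (fun s => F (scons 1 s)) + sign_mean n' (fun s => F (scons (-1) s))) / 2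
  else F (fun _ => 0).

Lemma eq_sign_mean n F G : (forall s, F s = G s) -> sign_mean n F = sign_mean n G.
Proof.
elim: n F G => [|n IH] F G FG /=; first exact: FG.
by congr ((_ + _) / 2); apply: IH => s; apply: FG.
Qed.

Lemma ler_sign_mean n F G : (forall s, F s <= G s) -> sign_mean n F <= sign_mean n G.
Proof.
elim: n F G => [|n IH] F G FG /=; first exact: FG.
by rewrite ler_pM2r // lerD // IH.
Qed.

Lemma sign_meanD n F G :
  sign_mean n (fun s => F s + G s) = sign_mean n F + sign_mean n G.
Proof.
elim: n F G => [|n IH] F G //=.
by rewrite (IH (fun s => F (scons 1 s))) (IH (fun s => F (scons (-1) s))); field.
Qed.

Lemma sign_meanZ n c F : sign_mean n (fun s => c * F s) = c * sign_mean n F.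
Proof.
elim: n F => [|n IH] F //=.
by rewrite (IH (fun s => F (scons 1 s))) (IH (fun s => F (scons (-1) s))); field.
Qed.

Lemma sign_mean_cst n c : sign_mean n (fun _ => c) = c.
Proof. by elim: n => [|n IH] //=; rewrite IH; field. Qed.

Lemma sign_mean_sum n (I : Type) (r : seq I) (P : pred I) (f : I -> (nat -> R) -> R) :
  sign_mean n (fun s => \sum_(i <- r | P i) f i s) = \sum_(i <- r | P i) sign_mean n (f i).
Proof.
elim: r => [|x r IH].
  by rewrite big_nil -[RHS](sign_mean_cst n); apply: eq_sign_mean => s; rewrite big_nil.
rewrite big_cons -IH; case Px: (P x); last by apply: eq_sign_mean => s; rewrite big_cons Px.
by rewrite -sign_meanD; apply: eq_sign_mean => s; rewrite big_cons Px.
Qed.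

Lemma exists_ge_sign_mean n F : exists s, sign_mean n F <= F s.
Proof.
elim: n F => [|n IH] F /=; first by exists (fun _ => 0).
have [s1 h1] := IH (fun s => F (scons 1 s)).
have [s2 h2] := IH (fun s => F (scons (-1) s)).
have [le12|lt21] := lerP (sign_mean n (fun s => F (scons 1 s)))
                         (sign_mean n (fun s => F (scons (-1) s))).
  by exists (scons (-1) s2); lra.
by exists (scons 1 s1); lra.
Qed.

Definition signed_sum n a (s : nat -> R) : R := \sum_(k < n) s k * a k.

Lemma signed_sum_scons n a x s :
  signed_sum n.+1 a (scons x s) = x * a 0%N + signed_sum n (fun k => a k.+1) s.
Proof. by rewrite /signed_sum big_ord_recl. Qed.

Lemma sign_meanS n F :
  sign_mean n.+1 F = sign_mean n (fun s => (F (scons 1 s) + F (scons (-1) s)) / 2).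
Proof.
rewrite [RHS](eq_sign_mean n (G := fun s => 2^-1 * (F (scons 1 s) + F (scons (-1) s)))).
  by rewrite sign_meanZ sign_meanD mulrC.
by move=> s; rewrite mulrC.
Qed.

Lemma sign_meanS_signed_sum n a (f : R -> R) :
  sign_mean n.+1 (fun s => f (signed_sum n.+1 a s)) =
  sign_mean n (fun s => (f (signed_sum n (fun k => a k.+1) s + a 0%N) +
                         f (signed_sum n (fun k => a k.+1) s - a 0%N)) / 2).
Proof.
rewrite sign_meanS; apply: eq_sign_mean => s.
by rewrite !signed_sum_scons mul1r mulN1r -!(addrC (signed_sum _ _ s)).
Qed.

Lemma sign_mean_signed_sum_sqr n a :
  sign_mean n (fun s => signed_sum n a s ^+ 2) = \sum_(k < n) a k ^+ 2.
Proof.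
elim: n a => [|n IH] a; first by rewrite /= /signed_sum !big_ord0 expr0n.
rewrite (sign_meanS_signed_sum n a (fun x => x ^+ 2)) big_ord_recl -(IH (fun k => a k.+1)).
rewrite -[a 0%N ^+ 2](sign_mean_cst n) -sign_meanD.
by apply: eq_sign_mean => s; field.
Qed.

End SignMean.

Section Moments.
Variable R : realType.

Lemma sum_ord_even_odd m (F : nat -> R) :
  \sum_(i < (2 * m).+1) F i = \sum_(j < m.+1) F (2 * j)%N + \sum_(j < m) F (2 * j).+1.
Proof.
elim: m => [|m IH]; first by rewrite muln0 !big_ord1 big_ord0 addr0.
have -> : (2 * m.+1).+1 = (2 * m).+3 by lia.
rewrite big_ord_recr /= big_ord_recr /= IH.
rewrite [X in _ = X + _]big_ord_recr [X in _ = _ + X]big_ord_recr /=.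
have -> : (2 * m.+1 = (2 * m).+2)%N by lia.
ring.
Qed.

Lemma even_binomial_sum (x y : R) m :
  ((x + y) ^+ (2 * m) + (x - y) ^+ (2 * m)) / 2 =
  \sum_(j < m.+1) 'C(2 * m, 2 * j)%:R * y ^+ (2 * j) * x ^+ (2 * (m - j)).
Proof.
rewrite !exprDn -big_split mulr_suml /=.
rewrite (sum_ord_even_odd m (fun i => (x ^+ (2 * m - i) * y ^+ i *+ 'C(2 * m, i) +
   x ^+ (2 * m - i) * (- y) ^+ i *+ 'C(2 * m, i)) / 2)) /=.
rewrite [X in _ + X]big1 ?addr0 => [|j _]; last first.
  by rewrite exprNn -signr_odd oddS oddM /= mulN1r mulrN mulNrn subrr mul0r.
apply: eq_bigr => j _.
by rewrite exprNn -signr_odd oddM /= mul1r mulnBr -mulr_natl; field.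
Qed.

(* [(2m)! / m! = 2^m (2m-1)!!]: the [2m]-th moment of a Rademacher sum with
   unit variance is at most this (Khintchine's inequality). *)
Definition moment_const (m : nat) : R := (2 * m)`!%:R / m`!%:R.

Lemma moment_const0 : moment_const 0 = 1.
Proof. by rewrite /moment_const muln0 divr1. Qed.

Lemma moment_const2 : moment_const 2 = 12.
Proof.
by rewrite /moment_const (_ : ((2 * 2)`! = 12 * 2`!)%N) // natrM mulfK // pnatr_eq0.
Qed.

Lemma moment_const_le m : moment_const m <= ((2 * m) ^ m)%:R.
Proof.
rewrite /moment_const ler_pdivrMr ?ltr0n ?fact_gt0 // -natrM ler_nat.
rewrite fact_prod (big_cat_nat _ (n := m.+1)) //=; last by lia.
rewrite -fact_prod [X in (X <= _)%N]mulnC leq_pmul2r ?fact_gt0 //.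
have -> : ((2 * m) ^ m = \prod_(m.+1 <= i < (2 * m).+1) (2 * m))%N.
  by rewrite prod_nat_const_nat (_ : (2 * m).+1 - m.+1 = m)%N //; lia.
rewrite big_nat_cond [X in (_ <= X)%N]big_nat_cond.
by apply: leq_prod => i /andP[/andP[_ hi] _]; lia.
Qed.

Lemma moment_const_binomial m j : (j <= m)%N ->
  'C(2 * m, 2 * j)%:R * moment_const (m - j) <= 'C(m, j)%:R * moment_const m.
Proof.
move=> le_jm; rewrite /moment_const mulnBr.
rewrite -(bin_fact (_ : 2 * j <= 2 * m)%N); last by lia.
rewrite -(bin_fact le_jm) !natrM.
have fact_gt0R k : 0 < k`!%:R :> R by rewrite ltr0n fact_gt0.
have binm_gt0 : 0 < 'C(m, j)%:R :> R by rewrite ltr0n bin_gt0.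
set C2 := 'C(2 * m, 2 * j)%:R; set C := 'C(m, j)%:R.
have -> : C * (C2 * ((2 * j)`!%:R * (2 * m - 2 * j)`!%:R) / (C * (j`!%:R * (m - j)`!%:R)))
    = (C2 * ((2 * m - 2 * j)`!%:R / (m - j)`!%:R)) * ((2 * j)`!%:R / j`!%:R).
  by field; rewrite !gt_eqF.
apply: ler_peMr; first by rewrite mulr_ge0 ?divr_ge0 ?ler0n.
by rewrite ler_pdivlMr // mul1r ler_nat leq_fact //; lia.
Qed.

Lemma sign_mean_signed_sum_moment n m (a : nat -> R) :
  sign_mean n (fun s => signed_sum n a s ^+ (2 * m)) <=
  moment_const m * (\sum_(k < n) a k ^+ 2) ^+ m.
Proof.
elim: n m a => [|n IH] m a.
  rewrite /= /signed_sum !big_ord0; case: m => [|m].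
    by rewrite muln0 !expr0 moment_const0 mulr1.
  have -> : (2 * m.+1 = (2 * m).+2)%N by lia.
  by rewrite !expr0n /= mulr0.
rewrite (sign_meanS_signed_sum n a (fun x => x ^+ (2 * m))).
set a' := fun k => a k.+1; set ma' := \sum_(k < n) a' k ^+ 2.
rewrite (eq_sign_mean n (G := fun s => \sum_(j < m.+1) ('C(2 * m, 2 * j)%:R * a 0%N ^+ (2 * j)) *
   signed_sum n a' s ^+ (2 * (m - j)))); last by move=> s; rewrite even_binomial_sum.
rewrite sign_mean_sum [\sum_(k < n.+1) _]big_ord_recl.
rewrite (_ : \sum_(i < n) a (lift ord0 i) ^+ 2 = ma'); last first.
  by apply: eq_bigr => i _; rewrite lift0.
rewrite addrC exprDn mulr_sumr; apply: ler_sum => j _.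
have le_jm : (j <= m)%N by rewrite -ltnS.
have a0_ge0 : 0 <= a 0%N ^+ (2 * j) by rewrite exprM exprn_ge0 ?sqr_ge0.
have ma'_ge0 : 0 <= ma' by apply: sumr_ge0 => k _; exact: sqr_ge0.
rewrite sign_meanZ.
apply: le_trans (ler_wpM2l _ (IH (m - j)%N a')) _; first by rewrite mulr_ge0.
rewrite -/ma' (_ : a ord0 = a 0%N) //.
set P := a 0%N ^+ (2 * j) * ma' ^+ (m - j).
have P_ge0 : 0 <= P by rewrite /P mulr_ge0 // exprn_ge0.
have -> : 'C(2 * m, 2 * j)%:R * a 0%N ^+ (2 * j) * (moment_const (m - j) * ma' ^+ (m - j))
    = 'C(2 * m, 2 * j)%:R * moment_const (m - j) * P by rewrite /P; ring.
have -> : moment_const m * (ma' ^+ (m - j) * (a 0%N ^+ 2) ^+ j *+ 'C(m, j))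
    = 'C(m, j)%:R * moment_const m * P by rewrite /P -exprM -mulr_natl; ring.
by apply: ler_wpM2r => //; apply: moment_const_binomial.
Qed.

End Moments.

Section SquaredNorms.
Variables (R : realType) (I : finType).
Implicit Types (q z : I -> R).

Lemma chebyshev_sum_pow q z r : (forall i, 0 <= q i) -> (forall i, 0 <= z i) ->
  (\sum_i q i * z i ^+ r) * (\sum_i q i * z i) <= (\sum_i q i) * \sum_i q i * z i ^+ r.+1.
Proof.
move=> q_ge0 z_ge0; rewrite -subr_ge0 !mulr_suml -sumrB.
pose d i j := q i * q j * (z j ^+ r.+1 - z i ^+ r * z j).
have -> : \sum_i (q i * \sum_j q j * z j ^+ r.+1 - q i * z i ^+ r * \sum_j q j * z j)
    = \sum_i \sum_j d i j.
  by apply: eq_bigr => i _; rewrite !mulr_sumr -sumrB; apply: eq_bigr => j _; rewrite /d; ring.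
rewrite -(pmulr_lge0 _ (ltr0Sn R 1)) mulr_natr mulr2n [X in _ + X]exchange_big -big_split.
apply: sumr_ge0 => i _; rewrite -big_split; apply: sumr_ge0 => j _ /=.
(* symmetrising turns the summand into a product of two differences of equal sign *)
have -> : d i j + d j i = q i * q j * ((z j ^+ r - z i ^+ r) * (z j - z i)).
  by rewrite /d !exprS; ring.
apply: mulr_ge0; first by rewrite mulr_ge0.
have [le_ij|lt_ji] := lerP (z i) (z j).
  by apply: mulr_ge0; rewrite subr_ge0 //; apply: lerXn2r; rewrite ?nnegrE.
rewrite -mulrNN !opprB; apply: mulr_ge0; rewrite subr_ge0; last exact: ltW.
by apply: lerXn2r; rewrite ?nnegrE ?z_ge0 // ltW.
Qed.

Lemma power_mean_le q z r : (forall i, 0 <= q i) -> (forall i, 0 <= z i) ->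
  (\sum_i q i * z i) ^+ r.+1 <= (\sum_i q i) ^+ r * \sum_i q i * z i ^+ r.+1.
Proof.
move=> q_ge0 z_ge0; have sumq_ge0 : 0 <= \sum_i q i by exact: sumr_ge0.
elim: r => [|r IH]; first by rewrite expr0 mul1r expr1.
rewrite exprS mulrC.
apply: le_trans (ler_wpM2r _ IH) _; first by apply: sumr_ge0 => i _; rewrite mulr_ge0.
rewrite -mulrA exprS (mulrC (\sum_i q i)) -mulrA ler_wpM2l ?exprn_ge0 //.
exact: chebyshev_sum_pow.
Qed.

Definition signed_sqnorm n (c : I -> nat -> R) (s : nat -> R) : R :=
  \sum_i signed_sum n (c i) s ^+ 2.

Definition coef_sqnorm n (c : I -> nat -> R) : R := \sum_i \sum_(k < n) c i k ^+ 2.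

Lemma signed_sqnorm_ge0 n c s : 0 <= signed_sqnorm n c s.
Proof. by apply: sumr_ge0 => i _; exact: sqr_ge0. Qed.

Lemma coef_sqnorm_ge0 n c : 0 <= coef_sqnorm n c.
Proof. by apply: sumr_ge0 => i _; apply: sumr_ge0 => k _; exact: sqr_ge0. Qed.

Lemma signed_sum_eq0 n (a : nat -> R) s :
  \sum_(k < n) a k ^+ 2 = 0 -> signed_sum n a s = 0.
Proof.
move=> /eqP; rewrite psumr_eq0 => [/allP a0|k _]; last exact: sqr_ge0.
by apply: big1 => k _; move: (a0 k (mem_index_enum _)); rewrite sqrf_eq0 => /eqP ->; rewrite mulr0.
Qed.

Lemma signed_sqnorm_eq0 n c s : coef_sqnorm n c = 0 -> signed_sqnorm n c s = 0.
Proof.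
move=> /eqP; rewrite psumr_eq0 => [/allP c0|i _]; last first.
  by apply: sumr_ge0 => k _; exact: sqr_ge0.
apply: big1 => i _; rewrite signed_sum_eq0 ?expr0n //.
exact/eqP/(c0 i (mem_index_enum _)).
Qed.

Lemma sign_mean_signed_sqnorm n c : sign_mean n (signed_sqnorm n c) = coef_sqnorm n c.
Proof. by rewrite sign_mean_sum; apply: eq_bigr => i _; exact: sign_mean_signed_sum_sqr. Qed.

Lemma sign_mean_signed_sqnorm_moment n c m :
  sign_mean n (fun s => signed_sqnorm n c s ^+ m) <= moment_const R m * coef_sqnorm n c ^+ m.
Proof.
case: m => [|m].
  by rewrite (eq_sign_mean n (G := fun _ => 1)) ?sign_mean_cst ?moment_const0 ?mul1r.
pose q i := \sum_(k < n) c i k ^+ 2.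
have q_ge0 i : 0 <= q i by apply: sumr_ge0 => k _; exact: sqr_ge0.
(* normalise each square by its mean, so that the power mean inequality applies *)
pose z i s := if q i == 0 then 0 else signed_sum n (c i) s ^+ 2 / q i.
have z_ge0 i s : 0 <= z i s by rewrite /z; case: ifP => // _; rewrite divr_ge0 ?sqr_ge0.
have qz i s : q i * z i s = signed_sum n (c i) s ^+ 2.
  rewrite /z; case: eqP => [q0|/eqP q0]; last by field.
  by rewrite signed_sum_eq0 // q0 expr0n mul0r.
have qzX i : sign_mean n (fun s => q i * z i s ^+ m.+1) <= moment_const R m.+1 * q i.
  have [q0|q0] := eqVneq (q i) 0.
    rewrite (eq_sign_mean n (G := fun _ => 0)) => [|s]; last by rewrite q0 mul0r.
    by rewrite sign_mean_cst q0 mulr0.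
  rewrite (eq_sign_mean n (G := fun s => (q i ^+ m)^-1 * signed_sum n (c i) s ^+ (2 * m.+1)));
    last by move=> s; rewrite /z (negbTE q0) exprMn exprVn -exprM exprS; field;
      rewrite expf_neq0.
  rewrite sign_meanZ ler_pdivrMl ?exprn_gt0 ?lt0r ?q0 ?q_ge0 //.
  by rewrite mulrCA -exprSr; exact: sign_mean_signed_sum_moment.
apply: le_trans (_ : sign_mean n (fun s => coef_sqnorm n c ^+ m * \sum_i q i * z i s ^+ m.+1) <= _).
  apply: ler_sign_mean => s; rewrite /signed_sqnorm -(eq_bigr _ (fun i _ => qz i s)).
  exact: power_mean_le.
rewrite sign_meanZ sign_mean_sum exprSr mulrCA ler_wpM2l ?exprn_ge0 ?coef_sqnorm_ge0 //.
by rewrite mulr_sumr; apply: ler_sum => i _; exact: qzX.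
Qed.

Lemma signed_sqnorm_at0 n (c : I -> nat -> R) : signed_sqnorm n c (fun _ => 0) = 0.
Proof.
apply: big1 => i _; rewrite (_ : signed_sum _ _ _ = 0) ?expr0n //.
by apply: big1 => k _; rewrite mul0r.
Qed.

(* By Markov's inequality, the chance that [signed_sqnorm] exceeds [4 m] times
   its mean is at most [2 ^ -m]. *)
Lemma sign_mean_ratio_moment n m (c : I -> nat -> R) : 0 < coef_sqnorm n c ->
  sign_mean n (fun s => (signed_sqnorm n c s / ((4 * m)%:R * coef_sqnorm n c)) ^+ m)
  <= (2 ^ m)%:R^-1.
Proof.
move=> y_gt0; set y := coef_sqnorm n c.
have [->|m_gt0] := posnP m.
  by rewrite (eq_sign_mean n (G := fun _ => 1)) ?sign_mean_cst ?invr1.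
have t_gt0 : 0 < (4 * m)%:R :> R by rewrite ltr0n; lia.
rewrite (eq_sign_mean n (G := fun s => ((4 * m)%:R * y) ^- m * signed_sqnorm n c s ^+ m));
  last by move=> s; rewrite exprMn exprVn mulrC.
rewrite sign_meanZ ler_pdivrMl ?exprn_gt0 ?mulr_gt0 //.
apply: le_trans (sign_mean_signed_sqnorm_moment _ _ _) _.
have -> : ((4 * m)%:R * y) ^+ m / (2 ^ m)%:R = ((2 * m) ^ m)%:R * y ^+ m.
  rewrite exprMn -natrX (_ : (4 * m) ^ m = 2 ^ m * (2 * m) ^ m)%N ?natrM; last first.
    by rewrite -expnMn mulnA.
  by field; rewrite pnatr_eq0 expn_eq0.
by rewrite ler_wpM2r ?exprn_ge0 ?coef_sqnorm_ge0 ?moment_const_le.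
Qed.

End SquaredNorms.

Section SignRounding.
Variables (R : realType) (I P : finType).
Implicit Types (a : I -> P -> nat -> R) (s : nat -> R).

Lemma potential_bound (T u b : R) : 0 < T -> 0 <= b ->
  T / 2 <= u - u ^+ 2 / (96 * T) - 24 * T * b -> T / 2 <= u /\ b < 1.
Proof.
move=> T_gt0 b_ge0 hPhi.
have sq_ge0 : 0 <= u ^+ 2 / (96 * T) by rewrite divr_ge0 ?sqr_ge0 ?mulr_ge0 ?ltW.
(* [u - u^2 / (96 T)] is a concave parabola with maximum [24 T] at [u = 48 T] *)
have top : u - u ^+ 2 / (96 * T) <= 24 * T.
  rewrite -subr_ge0 (_ : _ - _ = (u - 48 * T) ^+ 2 / (96 * T)); last by field; rewrite gt_eqF.
  by rewrite divr_ge0 ?sqr_ge0 ?mulr_ge0 ?ltW.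
have Tb_ge0 : 0 <= 24 * T * b by rewrite mulr_ge0 // mulr_ge0 // ltW.
by split; nra.
Qed.

Definition excess n m a s : R :=
  \sum_(i | (0 < coef_sqnorm n (a i))%R)
    (signed_sqnorm n (a i) s / ((4 * m)%:R * coef_sqnorm n (a i))) ^+ m.

Lemma excess_ge0 n m a s : 0 <= excess n m a s.
Proof.
by apply: sumr_ge0 => i _; rewrite exprn_ge0 // divr_ge0 ?signed_sqnorm_ge0 // mulr_ge0 ?coef_sqnorm_ge0.
Qed.

Lemma sign_mean_excess n m a :
  (128 * #|[set i | (0 < coef_sqnorm n (a i))%R]| <= 2 ^ m)%N ->
  sign_mean n (excess n m a) <= 128^-1.
Proof.
set S := [set i | _] => card_le; rewrite sign_mean_sum.
apply: le_trans (_ : \sum_(i in S) (2 ^ m)%:R^-1 <= _).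
  rewrite [leRHS]big_mkcond [leLHS]big_mkcond; apply: ler_sum => i _; rewrite inE.
  by case: ifP => // y_gt0; exact: sign_mean_ratio_moment.
rewrite sumr_const -(mulr_natl _ #|S|) ler_pdivrMr ?ltr0n ?expn_gt0 // mulrC ler_pdivlMr //.
by rewrite -natrM ler_nat mulnC.
Qed.

Lemma excess_lt1 n m a s : excess n m a s < 1 ->
  forall i, signed_sqnorm n (a i) s <= (4 * m)%:R * coef_sqnorm n (a i).
Proof.
move=> lt1 i; have [y_gt0|] := ltrP 0 (coef_sqnorm n (a i)); last first.
  move=> y_le0; have y0 : coef_sqnorm n (a i) = 0 by apply/eqP; rewrite eq_le coef_sqnorm_ge0 y_le0.
  by rewrite signed_sqnorm_eq0 // y0 mulr0.
pose ratio := signed_sqnorm n (a i) s / ((4 * m)%:R * coef_sqnorm n (a i)).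
have ratio_le : ratio ^+ m < 1.
  apply: le_lt_trans lt1; rewrite /excess (bigD1 i) //= lerDl.
  by apply: sumr_ge0 => j _; rewrite exprn_ge0 // divr_ge0 ?signed_sqnorm_ge0 // mulr_ge0 ?coef_sqnorm_ge0.
have [m0|m_gt0] := posnP m; first by rewrite m0 expr0 ltxx in ratio_le.
have t_gt0 : 0 < (4 * m)%:R :> R by rewrite ltr0n; lia.
rewrite -[leRHS]mul1r -ler_pdivrMr ?mulr_gt0 // -/ratio -(expr_le1 m_gt0); first exact: ltW.
by rewrite /ratio divr_ge0 ?signed_sqnorm_ge0 // mulr_ge0 ?coef_sqnorm_ge0.
Qed.

Lemma exists_sign_rounding (J : finType) n m (v : J -> nat -> R) a :
  (128 * #|[set i | (0 < coef_sqnorm n (a i))%R]| <= 2 ^ m)%N ->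
  exists s, coef_sqnorm n v / 2 <= signed_sqnorm n v s /\
    forall i, signed_sqnorm n (a i) s <= (4 * m)%:R * coef_sqnorm n (a i).
Proof.
move=> card_le; set T := coef_sqnorm n v.
have [T0|T_neq0] := eqVneq T 0.
  exists (fun _ => 0); rewrite T0 mul0r signed_sqnorm_at0; split => // i.
  by rewrite signed_sqnorm_at0 mulr_ge0 ?coef_sqnorm_ge0.
have T_gt0 : 0 < T by rewrite lt0r T_neq0 coef_sqnorm_ge0.
pose Phi s := signed_sqnorm n v s - signed_sqnorm n v s ^+ 2 / (96 * T) - 24 * T * excess n m a s.
have mean_Phi : T / 2 <= sign_mean n Phi.
  rewrite (eq_sign_mean n (G := fun s => signed_sqnorm n v s +
    (- (96 * T)^-1 * signed_sqnorm n v s ^+ 2 + - (24 * T) * excess n m a s))); last first.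
    by move=> s; rewrite /Phi; ring.
  rewrite !sign_meanD !sign_meanZ sign_mean_signed_sqnorm -/T.
  have := sign_mean_signed_sqnorm_moment n v 2; rewrite moment_const2 -/T => mean_sq.
  have : (96 * T)^-1 * sign_mean n (fun s => signed_sqnorm n v s ^+ 2) <= T / 8.
    apply: le_trans (ler_wpM2l _ mean_sq) _; first by rewrite invr_ge0 mulr_ge0 ?ltW.
    by rewrite le_eqVlt; apply/orP; left; apply/eqP; field; rewrite gt_eqF.
  have : 24 * T * sign_mean n (excess n m a) <= 24 * T / 128.
    by apply: ler_wpM2l; rewrite ?sign_mean_excess // mulr_ge0 // ltW.
  by lra.
have [s Phi_s] := exists_ge_sign_mean n Phi.
have [norm_s lt1] := potential_bound T_gt0 (excess_ge0 n m a s) (le_trans mean_Phi Phi_s).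
by exists s; split => //; exact: excess_lt1.
Qed.

End SignRounding.

Section PsdGram.
Variables (R : realType) (N : nat).
Implicit Types (A : 'M[R]_N) (x y : 'I_N -> R).

Definition bform A x y : R := \sum_j \sum_l x j * A j l * y l.

Definition psd_form A := (forall j l, A j l = A l j) /\ (forall x, 0 <= bform A x x).

Lemma psd_formP A : psd A -> psd_form A.
Proof.
case=> A_sym A_ge0; split => [j l|x]; first by rewrite -{1}A_sym mxE.
have := A_ge0 (\col_j x j); congr (0 <= _).
rewrite mxE; under eq_bigr => l _ do rewrite mxE mulr_suml.
by rewrite exchange_big; apply: eq_bigr => j _; apply: eq_bigr => l _; rewrite !mxE.
Qed.

Lemma bform_sym A x y : (forall j l, A j l = A l j) -> bform A x y = bform A y x.
Proof.
move=> A_sym; rewrite /bform exchange_big.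
by apply: eq_bigr => j _; apply: eq_bigr => l _; rewrite A_sym; ring.
Qed.

Lemma psd_form_CS A x y : psd_form A -> bform A x y ^+ 2 <= bform A x x * bform A y y.
Proof.
case=> A_sym A_ge0; set a := bform A x x; set b := bform A x y; set c := bform A y y.
have disc t : 0 <= a + 2 * t * b + t ^+ 2 * c.
  have := A_ge0 (fun j => x j + t * y j); congr (0 <= _).
  rewrite [RHS](_ : _ = a + t * b + t * bform A y x + t ^+ 2 * c).
    rewrite /a /b /c /bform !mulr_sumr -!big_split; apply: eq_bigr => j _.
    by rewrite !mulr_sumr -!big_split; apply: eq_bigr => l _ /=; ring.
  by rewrite (bform_sym _ _ A_sym) -/b; ring.
have [c0|c_neq0] := eqVneq c 0.
  have [b0|b_neq0] := eqVneq b 0; first by rewrite b0 c0 expr0n mulr0.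
  have := disc (- (a + 1) / (2 * b)); rewrite c0 mulr0 addr0.
  by rewrite (_ : a + 2 * (- (a + 1) / (2 * b)) * b = -1) ?ler0N1 //; field.
have c_gt0 : 0 < c by rewrite lt0r c_neq0 A_ge0.
have := disc (- b / c).
rewrite (_ : a + 2 * (- b / c) * b + (- b / c) ^+ 2 * c = a - b ^+ 2 / c); last by field.
by rewrite subr_ge0 ler_pdivrMr // mulrC.
Qed.

Lemma bform_delta A i l : bform A (fun k => (k == i)%:R) (fun k => (k == l)%:R) = A i l.
Proof.
rewrite /bform (bigD1 i) //= [X in _ + X]big1 => [|j /negbTE ji]; last first.
  by apply: big1 => k _; rewrite ji !mul0r.
rewrite addr0 (bigD1 l) //= [X in _ + X]big1 => [|k /negbTE kl]; last by rewrite kl mulr0.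
by rewrite !eqxx mul1r mulr1 addr0.
Qed.

Lemma psd_form_diag_ge0 A i : psd_form A -> 0 <= A i i.
Proof. by case=> _ A_ge0; rewrite -bform_delta. Qed.

Lemma psd_form_diag0 A i j : psd_form A -> A i i = 0 -> A i j = 0.
Proof.
move=> A_psd Aii0; have := psd_form_CS (fun k => (k == i)%:R) (fun k => (k == j)%:R) A_psd.
rewrite !bform_delta Aii0 mul0r => sq_le0.
by apply/eqP; rewrite -sqrf_eq0 eq_le sq_le0 sqr_ge0.
Qed.

(* The Schur complement of the pivot [A i i], i.e. [A - g g^T] with
   [g = A_(.,i) / sqrt (A i i)]. *)
Lemma psd_form_deflate A i : psd_form A -> 0 < A i i ->
  psd_form (\matrix_(j, l) (A j l - A j i * A l i / A i i)).
Proof.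
move=> A_psd Aii_gt0; have A_sym := A_psd.1; split => [j l|x].
  by rewrite !mxE A_sym (mulrC (A l i)).
pose u := \sum_j x j * A j i.
have -> : bform (\matrix_(j, l) (A j l - A j i * A l i / A i i)) x x = bform A x x - u ^+ 2 / A i i.
  rewrite expr2 /u mulr_suml mulr_suml /bform -sumrB; apply: eq_bigr => j _.
  rewrite mulr_sumr mulr_suml -sumrB; apply: eq_bigr => l _.
  by rewrite mxE (A_sym l i); field; rewrite gt_eqF.
rewrite subr_ge0 ler_pdivrMr //.
have := psd_form_CS x (fun k => (k == i)%:R) A_psd; rewrite bform_delta.
congr (_ ^+ 2 <= _); rewrite /bform /u; apply: eq_bigr => j _.
by rewrite (bigD1 i) //= eqxx mulr1 big1 ?addr0 // => l /negbTE ->; rewrite mulr0.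
Qed.

Lemma deflate_diag_support A i : psd_form A -> 0 < A i i ->
  [set k | (A k k - A k i * A k i / A i i) != 0] \subset [set k | A k k != 0] :\ i.
Proof.
move=> A_psd Aii_gt0; apply/fintype.subsetP => k; rewrite !inE => hk; apply/andP; split.
  by apply: contraNneq hk => ->; apply/eqP; field; rewrite gt_eqF.
apply: contraNneq hk => Akk0.
by rewrite Akk0 (psd_form_diag0 _ A_psd Akk0) !mul0r subr0.
Qed.

Lemma psd_form_gram A : psd_form A ->
  exists g : nat -> 'I_N -> R, forall j l, A j l = \sum_(k < N) g k j * g k l.
Proof.
(* Induct on the number of nonzero diagonal entries, peeling off one rank-one
   term per step with [psd_form_deflate]. *)
suff gram d A' : psd_form A' -> (#|[set i | (A' i i != 0)%R]| <= d)%N ->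
    exists g : nat -> 'I_N -> R, forall j l, A' j l = \sum_(k < d) g k j * g k l.
  by move=> /gram; apply; rewrite -[X in (_ <= X)%N](card_ord N) max_card.
elim: d A' => [|d IH] A' A'_psd card_le.
  exists (fun _ _ => 0) => j l; rewrite big_ord0; apply: psd_form_diag0 => //.
  by move: card_le; rewrite leqn0 cards_eq0 => /eqP/setP/(_ j); rewrite !inE => /negbFE/eqP.
have [/existsP[i A'ii_neq0]|] := boolP [exists i, A' i i != 0]; last first.
  rewrite negb_exists => /forallP diag0; exists (fun _ _ => 0) => j l.
  by rewrite (psd_form_diag0 _ A'_psd (eqP (negbNE (diag0 j)))) big1 // => k _; rewrite mul0r.
have A'ii_gt0 : 0 < A' i i by rewrite lt0r A'ii_neq0 psd_form_diag_ge0.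
pose g j := A' j i / Num.sqrt (A' i i).
have gg j l : g j * g l = A' j i * A' l i / A' i i.
  by rewrite /g mulf_div -expr2 sqr_sqrtr // ltW.
set A'' := \matrix_(j, l) (A' j l - A' j i * A' l i / A' i i).
have card_le'' : (#|[set k | (A'' k k != 0)%R]| <= d)%N.
  have -> : [set k | A'' k k != 0] = [set k | A' k k - A' k i * A' k i / A' i i != 0].
    by apply/setP => k; rewrite !inE mxE.
  have := subset_leq_card (deflate_diag_support A'_psd A'ii_gt0).
  by rewrite (cardsD1 i) inE A'ii_neq0 in card_le; lia.
have [g' hg'] := IH _ (psd_form_deflate A'_psd A'ii_gt0) card_le''.
exists (fun k => if (k < d)%N then g' k else g) => j l.
rewrite big_ord_recr /= ltnn gg (eq_bigr (fun k : 'I_d => g' k j * g' k l)) => [|k _].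
  by rewrite -(hg' j l) mxE subrK.
by rewrite ltn_ord.
Qed.

Lemma bform_gram A (g : nat -> 'I_N -> R) :
  (forall j l, A j l = \sum_(k < N) g k j * g k l) ->
  forall x, bform A x x = \sum_(h < N) (\sum_j g h j * x j) ^+ 2.
Proof.
move=> Ag x; transitivity (\sum_(h < N) \sum_j \sum_l (g h j * x j) * (g h l * x l)).
  have E j l : x j * A j l * x l = \sum_(h < N) (g h j * x j) * (g h l * x l).
    by rewrite Ag mulr_sumr mulr_suml; apply: eq_bigr => h _; ring.
  rewrite /bform; under eq_bigr => j _ do under eq_bigr => l _ do rewrite E.
  by under eq_bigr => j _ do rewrite exchange_big; rewrite exchange_big.
apply: eq_bigr => h _; rewrite expr2 mulr_suml; apply: eq_bigr => j _.
by rewrite mulr_sumr.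
Qed.

End PsdGram.

Section GramRounding.
Variables (R : realType) (N : nat).
Implicit Types (A X : 'M[R]_N) (v g : nat -> 'I_N -> R).

Lemma qform_bform A w : qform A w = bform A (fun j => w j 0) (fun j => w j 0).
Proof.
rewrite /qform /bform mxE; under eq_bigr => l _ do rewrite mxE mulr_suml.
by rewrite exchange_big; apply: eq_bigr => j _; apply: eq_bigr => l _; rewrite !mxE.
Qed.

Lemma qformZ A a w : qform A (a *: w) = a ^+ 2 * qform A w.
Proof.
rewrite !qform_bform /bform mulr_sumr; apply: eq_bigr => j _.
by rewrite mulr_sumr; apply: eq_bigr => l _; rewrite !mxE; ring.
Qed.

Lemma sqnormZ a (w : 'cV[R]_N) : sqnorm (a *: w) = a ^+ 2 * sqnorm w.
Proof. by rewrite /sqnorm mulr_sumr; apply: eq_bigr => j _; rewrite mxE exprMn. Qed.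

Lemma trace_gram X v : (forall j l, X j l = \sum_(k < N) v k j * v k l) ->
  \tr X = coef_sqnorm N (fun j k => v k j).
Proof.
by move=> Xv; apply: eq_bigr => j _; rewrite Xv; apply: eq_bigr => k _; rewrite expr2.
Qed.

Lemma trace_mul_gram A X v g :
  (forall j l, X j l = \sum_(k < N) v k j * v k l) ->
  (forall j l, A j l = \sum_(k < N) g k j * g k l) ->
  \tr (A *m X) = coef_sqnorm N (fun (h : 'I_N) k => \sum_j g h j * v k j).
Proof.
move=> Xv Ag; transitivity (\sum_(k < N) bform A (v k) (v k)).
  have E j l : A j l * X l j = \sum_(k < N) v k j * A j l * v k l.
    by rewrite Xv mulr_sumr; apply: eq_bigr => k _; ring.
  rewrite /mxtrace; under eq_bigr => j _ do rewrite mxE.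
  under eq_bigr => j _ do under eq_bigr => l _ do rewrite E.
  by under eq_bigr => j _ do rewrite exchange_big; rewrite exchange_big.
by rewrite /coef_sqnorm [RHS]exchange_big; apply: eq_bigr => k _; rewrite (bform_gram Ag).
Qed.

Lemma qform_gram A v g s :
  (forall j l, A j l = \sum_(k < N) g k j * g k l) ->
  qform A (\col_j signed_sum N (fun k => v k j) s) =
  signed_sqnorm N (fun (h : 'I_N) k => \sum_j g h j * v k j) s.
Proof.
move=> Ag; rewrite qform_bform (bform_gram Ag); apply: eq_bigr => h _; congr (_ ^+ 2).
under eq_bigr => j _ do rewrite mxE mulr_sumr.
rewrite exchange_big; apply: eq_bigr => k _ /=; rewrite mulr_sumr.
by apply: eq_bigr => j _; ring.
Qed.

Lemma psd_trace_ge0 X : psd X -> 0 <= \tr X.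
Proof. by move=> /psd_formP/psd_form_gram[v Xv]; rewrite (trace_gram Xv) coef_sqnorm_ge0. Qed.

Lemma psd_trace_mul_ge0 A X : psd A -> psd X -> 0 <= \tr (A *m X).
Proof.
move=> /psd_formP/psd_form_gram[g Ag] /psd_formP/psd_form_gram[v Xv].
by rewrite (trace_mul_gram Xv Ag) coef_sqnorm_ge0.
Qed.

Lemma psd_sign_rounding M m X (H : 'I_M -> 'M[R]_N) :
  psd X -> (forall i, psd (H i)) ->
  (128 * #|[set i | (0 < \tr (H i *m X))%R]| <= 2 ^ m)%N ->
  exists w : 'cV[R]_N, \tr X / 2 <= sqnorm w /\
    forall i, qform (H i) w <= (4 * m)%:R * \tr (H i *m X).
Proof.
move=> /psd_formP/psd_form_gram[v Xv] H_psd card_le.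
have /choice[g Hg] i := psd_form_gram (psd_formP (H_psd i)).
have trHX i := trace_mul_gram Xv (Hg i).
have card_le' : (128 * #|[set i | (0 < coef_sqnorm N (fun (h : 'I_N) k => \sum_j g i h j * v k j))%R]|
    <= 2 ^ m)%N.
  by rewrite (eq_card (B := [set i | (0 < \tr (H i *m X))%R])) // => i; rewrite !inE trHX.
have [s [norm_s qform_s]] := exists_sign_rounding (fun (j : 'I_N) k => v k j) card_le'.
exists (\col_j signed_sum N (fun k => v k j) s); split => [|i].
  rewrite (trace_gram Xv) (_ : sqnorm _ = signed_sqnorm N (fun j k => v k j) s) //.
  by apply: eq_bigr => j _; rewrite mxE.
by rewrite trHX (qform_gram _ _ (Hg i)).
Qed.

End GramRounding.

Section Constants.
Variable R : realType.

Lemma ln_ge1Vx (x : R) : 0 < x -> 1 - x^-1 <= ln x.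
Proof.
by move=> x_gt0; have := expR_ge1Dx (- ln x); rewrite expRN lnK ?posrE // => h; lra.
Qed.

Lemma trunc_log_pow_ge k : (128 * k <= 2 ^ (8 + trunc_log 2 k))%N.
Proof.
have := trunc_log_ltn k (isT : (1 < 2)%N); rewrite expnD expnS.
by set j := trunc_log 2 k; rewrite (_ : (2 ^ 8 = 256)%N) //; lia.
Qed.

(* For [K = 0] the left-hand side is [1 / (200 * ln 0) = 1 / 0 = 0]. *)
Lemma inv_ln_le_trunc_log (K : R) k : k%:R <= K -> K = 0 \/ 1 <= K ->
  1 / (200 * ln (50 * K)) <= (8 * (8 + trunc_log 2 k))%:R^-1.
Proof.
move=> le_kK [->|K_ge1]; first by rewrite mulr0 ln0 // mulr0 invr0 mulr0 invr_ge0.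
set j := trunc_log 2 k.
have pow_le : (2 ^ j)%:R <= K.
  have [k0|k_gt0] := posnP k; first by rewrite /j k0 (_ : trunc_log 2 0 = 0)%N.
  by apply: le_trans le_kK; rewrite ler_nat trunc_logP.
have lnK_ge : j%:R * ln 2 <= ln K.
  by rewrite mulr_natl -lnXn // -natrX ler_ln // posrE ?ltr0n ?expn_gt0 //; lra.
have ln50_ge : 1 - 50^-1 <= ln (50 : R) by apply: ln_ge1Vx.
have ln2_ge : 1 - 2^-1 <= ln (2 : R) by apply: ln_ge1Vx.
have j_ge0 : 0 <= j%:R :> R := ler0n _ _.
have : (8 * (8 + j))%:R <= 200 * ln (50 * K).
  rewrite lnM ?posrE ?ltr0n //; last by lra.
  rewrite natrM natrD; move: lnK_ge ln50_ge ln2_ge.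
  set L2 := ln 2; set L50 := ln 50; set LK := ln K; set J := j%:R; nra.
have lhs_gt0 : 0 < (8 * (8 + j))%:R :> R by rewrite ltr0n.
by move=> le_ln; rewrite div1r lef_pV2 ?posrE //; lra.
Qed.

Lemma inv_ln_K_ge0 (K : R) : K = 0 \/ 1 <= K -> 0 <= 1 / (200 * ln (50 * K)).
Proof.
move=> [->|K_ge1]; first by rewrite mulr0 ln0 // mulr0 invr0 mulr0.
by rewrite divr_ge0 // mulr_ge0 // ln_ge0 //; lra.
Qed.

Lemma ctilde_ge (M Q : nat) (eps : R) : eps < 1 -> eps <= ctilde M Q eps.
Proof.
move=> eps_lt1; have n_ge1 : 1 <= (M - Q + 1)%:R :> R by rewrite ler1n addn1.
have : (1 - eps) / (M - Q + 1)%:R <= 1 - eps.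
  rewrite ler_pdivrMr ?ltr0n ?addn1 //; apply: ler_peMr; first by rewrite subr_ge0 ltW.
  by rewrite ler1n.
by rewrite /ctilde; lra.
Qed.

End Constants.

Section QPRounding.
Variable R : realType.

Lemma select_large_weights M Q (b : 'I_M -> R) : (Q <= M)%N ->
  (forall i, b i <= 1) -> \sum_i b i = Q%:R ->
  exists B : {set 'I_M}, #|B| = Q /\ forall i, i \in B -> (M - Q + 1)%:R^-1 <= b i.
Proof.
move=> le_QM b_le1 sum_b; set th : R := (M - Q + 1)%:R^-1; set A := [set i | th <= b i].
suff /card_geqP[s [s_uniq s_size sA]] : (Q <= #|A|)%N.
  exists [set x in s]; rewrite cardsE (card_uniqP s_uniq) s_size; split => // i.
  by rewrite inE => /sA; rewrite inE.
rewrite leqNgt; apply/negP => lt_AQ.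
have th_gt0 : 0 < th by rewrite invr_gt0 ltr0n addn1.
have th_le1 : th <= 1 by rewrite invf_le1 ?ler1n ?ltr0n addn1.
have n_eq : (M - Q + 1)%:R = M%:R - Q%:R + 1 :> R by rewrite natrD natrB.
have th_eq : th * (M%:R - Q%:R + 1) = 1 by rewrite -n_eq mulVf ?pnatr_eq0 ?addn1.
have cardAC : #|~: A|%:R = M%:R - #|A|%:R :> R.
  by have := cardsC A; rewrite card_ord => cardA; rewrite -[in M%:R]cardA natrD addrC addKr.
have sumA : \sum_(i in A) b i <= #|A|%:R by rewrite -sum1_card natr_sum ler_sum.
have sumAC : \sum_(i in ~: A) b i < th * #|~: A|%:R.
  have [j jAC] : exists j, j \in ~: A.
    by apply/card_gt0P; have := cardsC A; rewrite card_ord; lia.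
  rewrite mulr_natr -sumr_const; apply: ltr_sum => [|i]; last by rewrite !inE -ltNge.
  by apply/hasP; exists j; rewrite ?mem_index_enum.
have QA : #|A|%:R + 1 <= Q%:R :> R by rewrite natr1 ler_nat.
have split_sum : \sum_(i in A) b i + \sum_(i in ~: A) b i = Q%:R.
  by rewrite -sum_b [RHS](bigID (mem A)) /=; congr (_ + _); apply: eq_bigl => i; rewrite inE.
(* [a + th (M - a)] increases with [a] and equals [Q] at [a = Q - 1] *)
have : 0 <= (Q%:R - #|A|%:R - 1) * (1 - th) by apply: mulr_ge0; lra.
by rewrite cardAC in sumAC; nra.
Qed.

Lemma card_le_K_of M N (H : 'I_M -> 'M[R]_N) (S : {set 'I_M}) :
  (forall i, i \in S -> H i != 0) -> #|S|%:R <= K_of H.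
Proof.
move=> S_neq0; rewrite -sum1_card natr_sum [leRHS](bigID (mem S)) /= -[leLHS]addr0.
apply: lerD; last by apply: sumr_ge0 => i _; rewrite le_min ler0n sqrtr_ge0.
apply: ler_sum => i iS; rewrite le_min ler1n lt0n mxrank_eq0 S_neq0 //=.
have M_ge1 : 1 <= M%:R :> R by rewrite ler1n (leq_ltn_trans (leq0n i) (ltn_ord i)).
by rewrite -[X in X <= _]sqrtr1 ler_wsqrtr //; lra.
Qed.

Lemma K_of_eq0_or_ge1 M N (H : 'I_M -> 'M[R]_N) : K_of H = 0 \/ 1 <= K_of H.
Proof.
have [/existsP[i Hi]|] := boolP [exists i, H i != 0].
  right; have := @card_le_K_of M N H [set i]; rewrite cards1; apply => j.
  by rewrite inE => /eqP ->.
rewrite negb_exists => /forallP H0; left; apply: big1 => i _.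
by move: (H0 i); rewrite negbK => /eqP ->; rewrite mxrank0 min_l ?sqrtr_ge0.
Qed.

End QPRounding.

Section SDPtoQP.
Variables (R : realType) (N M Q : nat) (eps : R) (H : 'I_M -> 'M[R]_N).

Definition qp_feasible (w : 'cV[R]_N) := exists beta : 'I_M -> bool,
  (forall i, qform (H i) w <= (beta i)%:R * eps + (1 - (beta i)%:R)) /\
  \sum_(i < M) ((beta i)%:R : R) = Q%:R.

Definition sdp_feasible (X : 'M[R]_N) := psd X /\ exists beta : 'I_M -> R,
  (forall i, \tr (H i *m X) <= beta i * eps + (1 - beta i)) /\
  \sum_(i < M) beta i = Q%:R /\ (forall i, 0 <= beta i <= 1).

Lemma indicator_sum (B : {set 'I_M}) : \sum_(i < M) ((i \in B) : nat)%:R = #|B|%:R :> R.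
Proof. by rewrite -sum1_card natr_sum [RHS]big_mkcond; apply: eq_bigr => i _; case: (i \in B). Qed.

Lemma qp_feasible0 : (Q <= M)%N -> 0 < eps -> qp_feasible 0.
Proof.
move=> le_QM eps_gt0; have /card_geqP[s [s_uniq s_size _]] : (Q <= #|'I_M|)%N by rewrite card_ord.
exists (fun i => i \in [set x in s]); rewrite indicator_sum cardsE (card_uniqP s_uniq) s_size.
split => // i; rewrite /qform mulmx0 mxE.
by case: (_ \in _); rewrite ?mul1r ?subrr ?addr0 ?ltW // mul0r subr0 add0r.
Qed.

(* Selected constraints ([inB]) must meet the tight bound [eps]: there
   [b >= 1 / (M - Q + 1)] gives [y <= ctilde]; the others only need [y <= 1].
   Scaling by [eps / ctilde <= 1] serves both. *)
Lemma rounded_constraint (y b : R) (inB : bool) : 0 < eps < 1 -> (Q <= M)%N ->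
  0 <= y -> 0 <= b <= 1 -> y <= b * eps + (1 - b) ->
  (inB -> (M - Q + 1)%:R^-1 <= b) ->
  eps / ctilde M Q eps * y <= inB%:R * eps + (1 - inB%:R).
Proof.
move=> /andP[eps_gt0 eps_lt1] le_QM y_ge0 /andP[b_ge0 b_le1] y_le inB_b.
have ct_ge := ctilde_ge M Q eps_lt1; have ct_gt0 : 0 < ctilde M Q eps := lt_le_trans eps_gt0 ct_ge.
have r_ge0 : 0 <= eps / ctilde M Q eps by rewrite divr_ge0 ?ltW.
have r_le1 : eps / ctilde M Q eps <= 1 by rewrite ler_pdivrMr // mul1r.
case: inB inB_b => [/(_ isT) b_ge|_] /=; rewrite ?mulr1n ?mulr0n; last first.
  by rewrite mul0r add0r subr0; nra.
rewrite mul1r subrr addr0 mulrAC ler_pdivrMr //; apply: ler_wpM2l; first exact: ltW.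
have : 0 <= (b - (M - Q + 1)%:R^-1) * (1 - eps) by apply: mulr_ge0; rewrite subr_ge0 // ltW.
by rewrite /ctilde; lra.
Qed.

Lemma sdp_feasible_to_qp X : 0 < eps < 1 -> (Q <= M)%N -> (forall i, psd (H i)) ->
  sdp_feasible X -> exists2 w, qp_feasible w &
  eps / ctilde M Q eps * (1 / (200 * ln (50 * K_of H))) * \tr X <= sqnorm w.
Proof.
move=> eps01 le_QM H_psd [X_psd [beta [beta_cons [beta_sum beta01]]]].
have [B [cardB B_large]] := select_large_weights le_QM (fun i => (andP (beta01 i)).2) beta_sum.
set k := #|[set i | (0 < \tr (H i *m X))%R]|; set m := (8 + trunc_log 2 k)%N.
have [w0 [norm_w0 qform_w0]] := psd_sign_rounding X_psd H_psd (trunc_log_pow_ge k).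
have [eps_gt0 eps_lt1] := andP eps01.
set r := eps / ctilde M Q eps.
have r_gt0 : 0 < r by rewrite divr_gt0 // (lt_le_trans eps_gt0 (ctilde_ge M Q eps_lt1)).
have t_gt0 : 0 < (4 * m)%:R :> R by rewrite ltr0n.
have lam2 : Num.sqrt (r / (4 * m)%:R) ^+ 2 = r / (4 * m)%:R.
  by rewrite sqr_sqrtr // divr_ge0 ?ltW.
exists (Num.sqrt (r / (4 * m)%:R) *: w0).
  exists (fun i => i \in B); split; last by rewrite indicator_sum cardB.
  move=> i; rewrite qformZ lam2.
  apply: le_trans (rounded_constraint eps01 le_QM (psd_trace_mul_ge0 (H_psd i) X_psd)
    (beta01 i) (beta_cons i) (B_large i)).
  rewrite -mulrA; apply: ler_wpM2l; first exact: ltW.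
  by rewrite mulrC ler_pdivrMr // mulrC; exact: qform_w0.
have k_le_K : k%:R <= K_of H.
  apply: card_le_K_of => i; rewrite inE; apply: contraTneq => ->.
  by rewrite mul0mx mxtrace0 ltxx.
rewrite sqnormZ lam2; apply: le_trans (_ : r / (4 * m)%:R * (\tr X / 2) <= _); last first.
  by apply: ler_wpM2l; rewrite // divr_ge0 ?ltW.
rewrite [leRHS](_ : _ = r * (8 * m)%:R^-1 * \tr X); last first.
  by rewrite (natrM _ 8) (natrM _ 4); field; rewrite pnatr_eq0.
apply: ler_wpM2r; first exact: psd_trace_ge0.
apply: ler_wpM2l; first exact: ltW.
exact: inv_ln_le_trunc_log k_le_K (K_of_eq0_or_ge1 H).
Qed.

End SDPtoQP.

Theorem theorem3p3 (R : realType) (N M Q : nat) (eps : R)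
  (H : 'I_M -> 'M[R]_N)
  (hN : (2 <= N)%N) (hM : (2 <= M)%N) (hQ1 : (1 <= Q)%N) (hQ2 : (Q <= M - 1)%N)
  (heps0 : 0 < eps) (heps1 : eps < 1)
  (hH : forall i, psd (H i)) :
  (((eps / ctilde M Q eps) * (1 / (200 * ln (50 * K_of H))))%:E
     * v_SDP Q eps H <= v_QP Q eps H)%E.
Proof.
set c := eps / ctilde M Q eps * _.
have le_QM : (Q <= M)%N by lia.
have eps01 : 0 < eps < 1 by rewrite heps0 heps1.
have [c0|c_neq0] := eqVneq c 0.
  rewrite c0 mul0e; apply: ereal_sup_ge; exists (sqnorm (0 : 'cV[R]_N))%:E.
    by exists 0 => //; exact: qp_feasible0.
  by rewrite lee_fin; apply: sumr_ge0 => j _; exact: sqr_ge0.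
have c_ge0 : 0 <= c.
  apply: mulr_ge0; last exact: inv_ln_K_ge0 (K_of_eq0_or_ge1 H).
  by rewrite divr_ge0 ?ltW // (lt_le_trans heps0 (ctilde_ge M Q heps1)).
have c_gt0 : 0 < c by rewrite lt0r c_neq0.
rewrite -ereal_sup_pZl //; apply: ge_ereal_sup => _ [_ [X X_sdp <-] <-].
have [w w_qp le_w] := sdp_feasible_to_qp eps01 le_QM hH X_sdp.
by apply: ereal_sup_ge; exists (sqnorm w)%:E; [exists w | rewrite -EFinM lee_fin].
Qed.
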